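(* Let $n\geq 2$, and let $0<x_1<\cdots<x_n$ and $0<y_1<\cdots<y_n$ be real numbers. Let $S=[1+x_iy_j]_{i,j=1}^n$. For $2\leq i\leq n$ let \[ \alpha_i=\frac{1+y_1x_i}{1+y_1x_{i-1}},\qquad \alpha_i'=\frac{1+x_1y_i}{1+x_1y_{i-1}}, \] and for $3\leq j\leq n$ let \[ \beta_j=\frac{(x_j-x_{j-1})(1+y_1x_{j-2})}{(x_{j-1}-x_{j-2})(1+y_1x_{j-1})},\qquad \beta_j'=\frac{(y_j-y_{j-1})(1+x_1y_{j-2})}{(y_{j-1}-y_{j-2})(1+x_1y_{j-1})}. \] Let $D$ be the $n\times n$ diagonal matrix with $D_{11}=1+x_1y_1$, $D_{22}=\dfrac{(x_2-x_1)(y_2-y_1)}{1+x_1y_1}$, and $D_{kk}=0$ for $3\leq k\leq n$. Then \[ S=\big(L_n(\alpha_n)\cdots L_2(\alpha_2)\big)\big(L_n(\beta_n)\cdots L_3(\beta_3)\big)\,D\,\big(U_3(\beta_3')\cdots U_n(\beta_n')\big)\big(U_2(\alpha_2')\cdots U_n(\alpha_n')\big). \]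
   Context: For a real number $s$ and $2\leq i\leq n$, $L_i(s)$ denotes the $n\times n$ matrix with all diagonal entries equal to $1$, $(i,i-1)$ entry equal to $s$, and all other entries zero; $U_i(s)$ denotes the $n\times n$ matrix with all diagonal entries equal to $1$, $(i-1,i)$ entry equal to $s$, and all other entries zero (elementary bidiagonal matrices). Empty products (e.g. when $n=2$) are the identity matrix. *)

(* Indices follow the paper (1-based) for the parameters
   L_i, U_i, x_i, y_i; matrix rows/columns are 'I_n (0-based). *)
From HB Require Import structures.
From mathcomp Require Import all_boot all_order all_algebra.
Set Implicit Arguments. Unset Strict Implicit. Unset Printing Implicit Defensive.
Import Order.TTheory GRing.Theory Num.Theory.
Local Open Scope ring_scope.

(* L_i(s): identity with entry s at paper position (i, i-1),
   i.e. 0-based row i-1, column i-2. *)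
Definition Lmx (R : pzRingType) (n i : nat) (s : R) : 'M[R]_n :=
  \matrix_(a < n, b < n)
    ((a == b)%:R + (if ((a : nat) == i.-1) && ((b : nat) == i.-2) then s else 0)).

(* U_i(s): identity with entry s at paper position (i-1, i). *)
Definition Umx (R : pzRingType) (n i : nat) (s : R) : 'M[R]_n :=
  \matrix_(a < n, b < n)
    ((a == b)%:R + (if ((a : nat) == i.-2) && ((b : nat) == i.-1) then s else 0)).

Definition mxprod (R : pzRingType) (n : nat) (s : seq nat) (F : nat -> 'M[R]_n)
  : 'M[R]_n := \big[@mulmx R n n n/1%:M]_(i <- s) F i.

Definition Smx (R : pzRingType) (n : nat) (x y : nat -> R) : 'M[R]_n :=
  \matrix_(i < n, j < n) (1 + x i.+1 * y j.+1).

Definition alpha (R : fieldType) (x y : nat -> R) (i : nat) : R :=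
  (1 + y 1%N * x i) / (1 + y 1%N * x i.-1).

Definition beta (R : fieldType) (x y : nat -> R) (j : nat) : R :=
  ((x j - x j.-1) * (1 + y 1%N * x j.-2)) /
  ((x j.-1 - x j.-2) * (1 + y 1%N * x j.-1)).

Definition Dmx (R : fieldType) (n : nat) (x y : nat -> R) : 'M[R]_n :=
  \matrix_(a < n, b < n)
    (if a == b then
       (if (a : nat) == 0%N then 1 + x 1%N * y 1%N
        else if (a : nat) == 1%N then
          (x 2%N - x 1%N) * (y 2%N - y 1%N) / (1 + x 1%N * y 1%N)
        else 0)
     else 0).

From mathcomp Require Import all_boot all_order all_algebra.
From mathcomp Require Import ring zify.
Set Implicit Arguments. Unset Strict Implicit. Unset Printing Implicit Defensive.
Import Order.TTheory GRing.Theory Num.Theory.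
Local Open Scope ring_scope.

(* The matrix S = 1 1^T + x y^T has rank two, and so does the right-hand side: D kills
   all but the first two columns of the lower factor L and the first two rows of the
   upper factor, which is the transpose of L with x and y swapped.  Since L_i(s) adds
   s times entry i-1 of a column vector to entry i, the columns of a product of such
   matrices solve a first-order recurrence; solving it shows that the first two
   columns of L are ((1 + y1 x_a) / (1 + y1 x1))_a and ((x_a - x1) / (x2 - x1))_a.
   What remains is the identity
     (1 + y1 x_i)(1 + x1 y_j) + (x_i - x1)(y_j - y1) = (1 + x1 y1)(1 + x_i y_j). *)

Local Notation ord_1 := (lift ord0 ord0).

Lemma mulmx_delta_col (R : pzRingType) m n (M : 'M[R]_(m, n)) a j :
  M a j = (M *m delta_mx j (0 : 'I_1)) a 0.
Proof. by rewrite -colE mxE. Qed.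

Section BidiagonalProducts.
Variables (R : pzRingType) (n : nat).
Implicit Types (c : nat -> R) (w : 'cV[R]_n).

Lemma mxprod_nil (F : nat -> 'M[R]_n) : mxprod [::] F = 1%:M.
Proof. by rewrite /mxprod big_nil. Qed.

Lemma mxprod_cons i s (F : nat -> 'M[R]_n) : mxprod (i :: s) F = F i *m mxprod s F.
Proof. by rewrite /mxprod big_cons. Qed.

Lemma mxprod_cat s t (F : nat -> 'M[R]_n) : mxprod (s ++ t) F = mxprod s F *m mxprod t F.
Proof.
elim: s => [|i s IHs] /=; first by rewrite mxprod_nil mul1mx.
by rewrite !mxprod_cons IHs mulmxA.
Qed.

Lemma mulLmx_entry_other i s w (a : 'I_n) :
  (a : nat) != i.-1 -> (Lmx n i s *m w) a 0 = w a 0.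
Proof.
move=> /negbTE a_neq; rewrite mxE (bigD1 a) //= big1 => [|b /negbTE b_neq].
  by rewrite !mxE eqxx a_neq /= !addr0 mul1r.
by rewrite !mxE a_neq eq_sym b_neq addr0 mul0r.
Qed.

Lemma mulLmx_entry_step s w (a b : 'I_n) :
  a = b.+1 :> nat -> (Lmx n b.+2 s *m w) a 0 = w a 0 + s * w b 0.
Proof.
move=> a_eq; have ab : a != b by apply/eqP => /(congr1 val) /=; lia.
rewrite mxE (bigD1 a) // (bigD1 b) /=; last by rewrite eq_sym.
rewrite big1 => [|j /andP [ja jb]].
  rewrite !mxE !eqxx a_eq eqxx (negbTE ab) (gtn_eqF (ltnSn b)) /=.
  by rewrite add0r !addr0 mul1r.
by rewrite !mxE [a == j]eq_sym (negbTE ja) a_eq eqxx /= val_eqE (negbTE jb) addr0 mul0r.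
Qed.

Definition Lprod k m c : 'M[R]_n := mxprod (rev (iota k m)) (fun i => Lmx n i (c i)).

Lemma Lprod_rcons k m c : Lprod k m.+1 c = Lmx n (k + m) (c (k + m)) *m Lprod k m c.
Proof. by rewrite /Lprod -addn1 iotaD rev_cat /= mxprod_cons. Qed.

Lemma mulLprod_entry_fixed k m c w (a : 'I_n) :
  ~~ (k.+1 <= a < k.+1 + m)%N -> (Lprod k.+2 m c *m w) a 0 = w a 0.
Proof.
elim: m => [|m IHm] a_out; first by rewrite /Lprod mxprod_nil mul1mx.
rewrite Lprod_rcons -mulmxA mulLmx_entry_other; last by rewrite addSn /=; lia.
by apply: IHm; lia.
Qed.

Lemma mulLprod_entry_step k m c w (a b : 'I_n) :
  a = b.+1 :> nat -> (k.+1 <= a < k.+1 + m)%N ->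
  (Lprod k.+2 m c *m w) a 0 = w a 0 + c a.+1 * (Lprod k.+2 m c *m w) b 0.
Proof.
move=> a_eq; elim: m => [|m IHm] a_in; first lia.
rewrite Lprod_rcons -!mulmxA [in RHS]mulLmx_entry_other; last by rewrite addSn /=; lia.
have [a_last | a_prev] := eqVneq (a : nat) (k.+1 + m).
  have -> : (k.+2 + m)%N = b.+2 by lia.
  rewrite mulLmx_entry_step // mulLprod_entry_fixed ?a_last //; lia.
by rewrite mulLmx_entry_other ?addSn //; apply: IHm; lia.
Qed.

Lemma mulLprod_entry_solution k m c w (f : nat -> R) :
  (n <= k.+1 + m)%N ->
  (forall a : 'I_n, (a <= k)%N -> f a = w a 0) ->
  (forall a : 'I_n, (k < a)%N -> f a = w a 0 + c a.+1 * f a.-1) ->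
  forall a : 'I_n, (Lprod k.+2 m c *m w) a 0 = f a.
Proof.
move=> n_le f_init f_step [a a_lt]; elim: a a_lt => [|a IHa] a_lt.
  by rewrite mulLprod_entry_fixed ?(f_init (Ordinal a_lt)).
have [a_le | k_lt] := leqP a.+1 k.
  by rewrite mulLprod_entry_fixed ?(f_init (Ordinal a_lt)) //=; lia.
rewrite (@mulLprod_entry_step _ _ _ _ (Ordinal a_lt) (Ordinal (ltnW a_lt))) //=; last lia.
by rewrite IHa (f_step (Ordinal a_lt)).
Qed.

End BidiagonalProducts.

Lemma trmx_Umx (R : pzRingType) n i (s : R) : (Umx n i s)^T = Lmx n i s.
Proof. by apply/matrixP => a b; rewrite !mxE [b == a]eq_sym andbC. Qed.

Lemma trmx_mxprod (R : comPzRingType) n s (F : nat -> 'M[R]_n) :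
  (mxprod s F)^T = mxprod (rev s) (fun i => (F i)^T).
Proof.
elim: s => [|i s IHs] /=; first by rewrite !mxprod_nil trmx1.
rewrite mxprod_cons trmx_mul IHs rev_cons -cats1 mxprod_cat.
by rewrite [in RHS]mxprod_cons mxprod_nil mulmx1.
Qed.

Lemma trmx_Uprod (R : comPzRingType) n s (c : nat -> R) :
  (mxprod s (fun i => Umx n i (c i)))^T = mxprod (rev s) (fun i => Lmx n i (c i)).
Proof. by rewrite trmx_mxprod /mxprod; apply: eq_bigr => i _; rewrite trmx_Umx. Qed.

Definition Lfactor (R : fieldType) n (x y : nat -> R) : 'M[R]_n :=
  Lprod n 2 n.-1 (alpha x y) *m Lprod n 3 n.-2 (beta x y).

Lemma Ufactor_trmx (R : fieldType) n (x y : nat -> R) :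
  mxprod (iota 3 n.-2) (fun j => Umx n j (beta y x j)) *m
  mxprod (iota 2 n.-1) (fun i => Umx n i (alpha y x i)) = (Lfactor n y x)^T.
Proof. by rewrite -[LHS]trmxK trmx_mul !trmx_Uprod. Qed.

Section LfactorColumns.
Variables (R : fieldType) (n : nat) (x y : nat -> R).
Hypothesis denom_neq0 : forall i, (1 <= i <= n.+2)%N -> 1 + y 1 * x i != 0.
Hypothesis gap_neq0 : forall i, (2 <= i <= n.+2)%N -> x i - x i.-1 != 0.

Lemma Lfactor_col0 (a : 'I_n.+2) :
  Lfactor n.+2 x y a ord0 = (1 + y 1 * x a.+1) / (1 + y 1 * x 1).
Proof.
rewrite mulmx_delta_col -mulmxA /Lfactor /=.
have beta_e0 : forall b : 'I_n.+2,
    (Lprod n.+2 3 n (beta x y) *m delta_mx ord0 (0 : 'I_1)) b 0 = ((b : nat) == 0)%:R.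
  apply: (mulLprod_entry_solution (k := 1) (f := fun b => (b == 0)%:R))
    => //= [b _|[[|[|b]] b_lt] //= _].
    by rewrite mxE andbT.
  by rewrite mxE mulr0 addr0.
apply: (mulLprod_entry_solution (k := 0) (f := fun b => (1 + y 1 * x b.+1) / (1 + y 1 * x 1)))
  => //= [[[|b] b_lt] //= _|[[|b] b_lt] //= _].
  by rewrite beta_e0 divff // denom_neq0.
rewrite beta_e0 add0r /alpha /=.
by field; rewrite !denom_neq0 //; lia.
Qed.

Lemma Lfactor_col1 (a : 'I_n.+2) :
  Lfactor n.+2 x y a ord_1 = (x a.+1 - x 1) / (x 2 - x 1).
Proof.
rewrite mulmx_delta_col -mulmxA /Lfactor /=.
pose g (b : nat) := if b == 0 then 0 else
  (x b.+1 - x b) * (1 + y 1 * x 1) / ((x 2 - x 1) * (1 + y 1 * x b)).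
have beta_e1 : forall b : 'I_n.+2,
    (Lprod n.+2 3 n (beta x y) *m delta_mx ord_1 (0 : 'I_1)) b 0 = g b.
  apply: (mulLprod_entry_solution (k := 1) (f := g))
    => //= [[[|[|b]] b_lt] //= _|[[|[|b]] b_lt] //= _]; rewrite mxE /g //=.
    by field; rewrite denom_neq0 // (@gap_neq0 2).
  rewrite add0r /beta /=.
  by field; rewrite !denom_neq0 ?(@gap_neq0 2) ?(@gap_neq0 b.+2) //=; lia.
apply: (mulLprod_entry_solution (k := 0) (f := fun b => (x b.+1 - x 1) / (x 2 - x 1)))
  => //= [[[|b] b_lt] //= _|[[|b] b_lt] //= _].
  by rewrite beta_e1 /g subrr mul0r.
rewrite beta_e1 /g /alpha /=.
by field; rewrite !denom_neq0 ?(@gap_neq0 2) //=; lia.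
Qed.

End LfactorColumns.

Lemma mulmx_Dmx_entry (R : fieldType) n (x y : nat -> R) (A : 'M[R]_n) i k :
  (A *m Dmx n x y) i k = A i k * Dmx n x y k k.
Proof.
rewrite mxE (bigD1 k) //= big1 ?addr0 // => l /negbTE l_neq.
by rewrite [Dmx _ _ _ l k]mxE l_neq mulr0.
Qed.

Lemma mulmx_Dmx_trmx_entry (R : fieldType) n (x y : nat -> R) (A B : 'M[R]_n.+2) i j :
  (A *m Dmx n.+2 x y *m B^T) i j =
    A i ord0 * (1 + x 1 * y 1) * B j ord0 +
    A i ord_1 * ((x 2 - x 1) * (y 2 - y 1) / (1 + x 1 * y 1)) * B j ord_1.
Proof.
rewrite mxE (bigD1 ord0) // (bigD1 ord_1) // big1 => [|k /andP [/andP [_ k0] k1]].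
  by rewrite /= addr0 !mulmx_Dmx_entry !mxE.
have /negbTE k_neq0 : (k : nat) != 0 by [].
have /negbTE k_neq1 : (k : nat) != 1 by [].
by rewrite mulmx_Dmx_entry [Dmx _ _ _ k k]mxE eqxx k_neq0 k_neq1 mulr0 mul0r.
Qed.

Lemma incr_gt0 (R : realFieldType) n (z : nat -> R) :
  0 < z 1 -> (forall i, (1 <= i)%N -> (i < n)%N -> z i < z i.+1) ->
  forall i, (1 <= i <= n)%N -> 0 < z i.
Proof.
move=> z1_gt0 z_incr; elim=> [|[|i] IHi] //= i_in.
by apply: lt_trans (IHi _) (z_incr _ _ _); lia.
Qed.

Lemma incr_subr_neq0 (R : realFieldType) n (z : nat -> R) :
  (forall i, (1 <= i)%N -> (i < n)%N -> z i < z i.+1) ->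
  forall i, (2 <= i <= n)%N -> z i - z i.-1 != 0.
Proof. by move=> z_incr [|[|i]] //= i_in; rewrite subr_eq0 gt_eqF // z_incr //; lia. Qed.

Lemma incr_denom_neq0 (R : realFieldType) n (u v : nat -> R) :
  0 < u 1 -> 0 < v 1 -> (forall i, (1 <= i)%N -> (i < n)%N -> u i < u i.+1) ->
  forall i, (1 <= i <= n)%N -> 1 + v 1 * u i != 0.
Proof.
move=> u1_gt0 v1_gt0 u_incr i i_in.
by rewrite lt0r_neq0 // addr_gt0 // mulr_gt0 // (incr_gt0 u1_gt0 u_incr).
Qed.

Theorem theorem2p2 (R : realFieldType) (n : nat) (x y : nat -> R) :
  (2 <= n)%N ->
  0 < x 1%N -> (forall i : nat, (1 <= i)%N -> (i < n)%N -> x i < x i.+1) ->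
  0 < y 1%N -> (forall i : nat, (1 <= i)%N -> (i < n)%N -> y i < y i.+1) ->
  Smx n x y =
    mxprod (rev (iota 2 n.-1)) (fun i => Lmx n i (alpha x y i)) *m
    mxprod (rev (iota 3 n.-2)) (fun j => Lmx n j (beta x y j)) *m
    Dmx n x y *m
    mxprod (iota 3 n.-2) (fun j => Umx n j (beta y x j)) *m
    mxprod (iota 2 n.-1) (fun i => Umx n i (alpha y x i)).
Proof.
move=> n_ge2 x1_gt0 x_incr y1_gt0 y_incr.
rewrite -mulmxA Ufactor_trmx.
change (Smx n x y = Lfactor n x y *m Dmx n x y *m (Lfactor n y x)^T).
case: n n_ge2 x_incr y_incr => [|[|n]] // _ x_incr y_incr.
have x_denom := incr_denom_neq0 x1_gt0 y1_gt0 x_incr.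
have y_denom := incr_denom_neq0 y1_gt0 x1_gt0 y_incr.
have x_gap := incr_subr_neq0 x_incr.
have y_gap := incr_subr_neq0 y_incr.
apply/matrixP => i j.
rewrite mulmx_Dmx_trmx_entry !Lfactor_col0 // !Lfactor_col1 // mxE /=.
by field; rewrite mulrC (x_denom 1) ?(x_gap 2) ?(y_gap 2).
Qed.
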